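(* If $G$ is a finite directed acyclic graph, then the complex of directed trees $\mathrm{DT}(G)$ is shellable.
   Context: All graphs are finite and directed. A directed acyclic graph is a directed graph with no directed cycles. A directed forest is a set of edges which, viewed as a graph, is acyclic and has at most one edge directed to each vertex. The complex of directed trees $\mathrm{DT}(G)$ is the simplicial complex whose vertex set is the edge set $E(G)$, a set of edges being a simplex iff it is a directed forest. A simplicial complex $\Delta$ is shellable if its maximal faces can be ordered $F_1,\dots,F_n$ such that for all $1\le i<k\le n$ there exist $1\le j<k$ and $e\in F_k$ with $F_i\cap F_k\subseteq F_j\cap F_k=F_k\setminus\{e\}$. *)

From mathcomp Require Import all_boot.
Set Implicit Arguments. Unset Strict Implicit. Unset Printing Implicit Defensive.

(* A finite directed graph: a finite vertex type V and an edge relation e;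
   the edge set E(G) is the set of pairs (u,v) with e u v. *)

Definition edge_set (V : finType) (e : rel V) : {set V * V} :=
  [set p | e p.1 p.2].

(* A relation has no directed cycle (a loop counts as a cycle). *)
Definition acyclic_rel (V : finType) (r : rel V) : Prop :=
  forall x y, r x y -> ~~ connect r y x.

Definition dag (V : finType) (e : rel V) : Prop := acyclic_rel e.

Definition rel_of (V : finType) (F : {set V * V}) : rel V :=
  fun x y => (x, y) \in F.

Definition directed_forest (V : finType) (F : {set V * V}) : Prop :=
  acyclic_rel (rel_of F) /\ forall v : V, #|[set p in F | p.2 == v]| <= 1.

Definition DT_face (V : finType) (e : rel V) (F : {set V * V}) : Prop :=
  F \subset edge_set e /\ directed_forest F.

(* A simplicial complex on ground type T is given by its predicate of faces. *)
Definition facet (T : finType) (face : {set T} -> Prop) (F : {set T}) : Prop :=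
  face F /\ forall F', face F' -> F \subset F' -> F' = F.

Definition shellable (T : finType) (face : {set T} -> Prop) : Prop :=
  exists s : seq {set T},
    uniq s /\ (forall F, F \in s <-> facet face F) /\
    forall i k, i < k -> k < size s ->
      exists j, j < k /\ exists x,
        x \in nth set0 s k /\
        nth set0 s i :&: nth set0 s k \subset nth set0 s j :&: nth set0 s k /\
        nth set0 s j :&: nth set0 s k = nth set0 s k :\ x.

From mathcomp Require Import all_boot.
Set Implicit Arguments. Unset Strict Implicit. Unset Printing Implicit Defensive.

(* In a dag every set of edges is acyclic, so the faces of DT(G) are the edge
   sets with pairwise distinct heads, and the facets are those that choose one
   in-edge for every vertex of positive in-degree.  Fix a facet D and order the
   facets by the number of their edges outside D.  If F_i precedes F_k, some
   edge x of F_k lies neither in D nor in F_i; replacing x by the edge of D with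
   the same head gives a facet F_j closer to D, and
   F_i :&: F_k \subset F_j :&: F_k = F_k :\ x. *)

Section Shellability.
Variable T : finType.

Lemma eq_facet (P Q : {set T} -> Prop) :
  (forall F, P F <-> Q F) -> forall F, facet P F <-> facet Q F.
Proof.
move=> PQ F; split=> [[/PQ PF maxF] | [/PQ QF maxF]].
  by split=> // F' /PQ; apply: maxF.
by split=> // F' /PQ; apply: maxF.
Qed.

Lemma exists_facet (face : pred {set T}) : face set0 -> exists F, facet face F.
Proof.
move=> face0.
case: (@arg_maxnP _ set0 face (fun F => #|F|) face0) => F faceF maxF.
exists F; split=> // F' faceF' sFF'; apply/eqP; rewrite eq_sym eqEcard sFF'.
exact: maxF.
Qed.

Lemma shellable_by_rank (face : {set T} -> Prop) (is_facet : pred {set T})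
    (rank : {set T} -> nat) :
  (forall F, facet face F <-> is_facet F) ->
  (forall Fi Fk, is_facet Fi -> is_facet Fk -> Fi != Fk -> rank Fi <= rank Fk ->
     exists Fj x, [/\ is_facet Fj, rank Fj < rank Fk, x \in Fk,
       Fi :&: Fk \subset Fj :&: Fk & Fj :&: Fk = Fk :\ x]) ->
  shellable face.
Proof.
move=> facetE exchange.
pose le_rank := relpre rank leq.
have le_rank_trans : transitive le_rank by move=> ? ? ?; apply: leq_trans.
pose s := sort le_rank (enum is_facet).
have s_sorted : sorted le_rank s by apply: sort_sorted => F G; exact: leq_total.
have s_uniq : uniq s by rewrite sort_uniq enum_uniq.
have mem_s F : F \in s = is_facet F by rewrite mem_sort mem_enum.
have rank_mono : {in [pred n | n < size s] &,
    {homo nth set0 s : i j / i <= j >-> le_rank i j}}.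
  exact: sorted_leq_nth le_rank_trans (fun F => leqnn (rank F)) set0 s s_sorted.
exists s; split=> //; split=> [F | i k lt_ik lt_ks].
  by rewrite mem_s; apply: iff_sym.
have lt_is : i < size s := ltn_trans lt_ik lt_ks.
have Fi_facet : is_facet (nth set0 s i) by rewrite -mem_s mem_nth.
have Fk_facet : is_facet (nth set0 s k) by rewrite -mem_s mem_nth.
have neq_ik : nth set0 s i != nth set0 s k by rewrite nth_uniq // neq_ltn lt_ik.
have [Fj [x [Fj_facet lt_jk xFk sij Ejk]]] :=
  exchange _ _ Fi_facet Fk_facet neq_ik (rank_mono i k lt_is lt_ks (ltnW lt_ik)).
have Fj_s : Fj \in s by rewrite mem_s.
exists (index Fj s); split; last by exists x; rewrite nth_index.
rewrite ltnNge; apply/negP => le_kj.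
have := rank_mono k (index Fj s) lt_ks; rewrite nth_index // inE index_mem.
by move=> /(_ Fj_s le_kj); rewrite /le_rank /= leqNgt lt_jk.
Qed.

End Shellability.

Lemma setI_swap (T : finType) (F : {set T}) x d : d \notin F ->
  (d |: F :\ x) :&: F = F :\ x.
Proof.
move=> dF; apply/setP => q; rewrite !inE.
have [-> | _] := eqVneq q d; first by rewrite (negPf dF) !andbF.
by rewrite /= -andbA andbb.
Qed.

Lemma card_swapD (T : finType) (D F : {set T}) x d : d \in D -> x \in F :\: D ->
  #|(d |: F :\ x) :\: D| < #|F :\: D|.
Proof.
move=> dD xFD; have -> : (d |: F :\ x) :\: D = (F :\: D) :\ x.
  apply/setP => q; rewrite !inE.
  have [-> | _] := eqVneq q d; first by rewrite dD !andbF.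
  by rewrite andbCA.
by rewrite [#|F :\: D|](cardsD1 x) xFD.
Qed.

Section Branchings.
Variables (V : finType) (e : rel V).
Implicit Types (D F G : {set V * V}) (p q x d : V * V).

(* Acyclicity is left out: inside a dag it is automatic (see DT_faceE). *)
Definition branching F := (F \subset edge_set e) && dinjectiveb snd F.

Definition covers_heads F := snd @: edge_set e \subset snd @: F.

Definition spanning_branching F := branching F && covers_heads F.

Lemma branchingP F :
  reflect (F \subset edge_set e /\ {in F &, injective snd}) (branching F).
Proof. by apply: (iffP andP) => -[sFE /dinjectiveP]. Qed.

Lemma branching0 : branching set0.
Proof. by apply/branchingP; split=> [|p q]; rewrite ?sub0set ?inE. Qed.

Lemma branchingS F G : G \subset F -> branching F -> branching G.
Proof.
move=> sGF /branchingP[sFE injF]; apply/branchingP; split.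
  exact: subset_trans sFE.
by apply: sub_in2 injF => p; apply: (subsetP sGF).
Qed.

Lemma branchingU1 F p : branching F -> p \in edge_set e -> p.2 \notin snd @: F ->
  branching (p |: F).
Proof.
move=> /branchingP[sFE injF] pE pF; apply/branchingP; split.
  by rewrite subUset sub1set pE.
move=> q r; rewrite !in_setU1 => /predU1P[-> | qF] /predU1P[-> | rF] //= Eqr.
- by case/imsetP: pF; exists r.
- by case/imsetP: pF; exists q.
- exact: injF.
Qed.

Lemma DT_faceE F : dag e -> DT_face e F <-> branching F.
Proof.
move=> dag_e; split=> [[sFE [_ indegF]] | /branchingP[sFE injF]].
  apply/branchingP; split=> // p q pF qF Epq.
  by apply: (card_le1_eqP (indegF p.2)); rewrite inE ?pF ?qF ?Epq /=.
have sub_e : subrel (rel_of F) e.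
  by move=> u v /(subsetP sFE); rewrite inE.
split=> //; split=> [u v Fuv | v].
  apply: contra (dag_e u v (sub_e u v Fuv)); apply: connect_sub => x y Fxy.
  exact/connect1/sub_e.
apply/card_le1_eqP => p q; rewrite !inE => /andP[pF /eqP pv] /andP[qF /eqP qv].
by apply: injF; rewrite // pv qv.
Qed.

Lemma facet_branchingE F : facet branching F <-> spanning_branching F.
Proof.
split=> [[brF maxF] | /andP[/branchingP[sFE injF] covF]].
  rewrite /spanning_branching brF; apply/subsetP => _ /imsetP[p pE ->].
  apply: contraT => pF.
  have EpF : p |: F = F by apply: maxF (subsetUr _ _); apply: branchingU1.
  by case/negP: pF; rewrite -EpF imset_f ?setU11.
split=> [|G /branchingP[sGE injG] sFG]; first exact/branchingP.
apply/eqP; rewrite eqEsubset sFG andbT; apply/subsetP => q qG.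
have /imsetP[r rF Eqr] := subsetP covF _ (imset_f snd (subsetP sGE q qG)).
by rewrite (injG q r) // (subsetP sFG).
Qed.

Lemma spanning_branching_subset D F G : branching D -> branching F ->
  covers_heads G -> F :\: D = G :\: D -> F \subset G.
Proof.
move=> /branchingP[_ injD] /branchingP[sFE injF] covG EFG.
apply/subsetP => q qF; have [qD | qD] := boolP (q \in D); last first.
  by have /setDP[] : q \in G :\: D by rewrite -EFG inE qD.
have /imsetP[r rG Eqr] := subsetP covG _ (imset_f snd (subsetP sFE q qF)).
have [rD | rD] := boolP (r \in D); first by rewrite (injD q r).
have /setDP[rF _] : r \in F :\: D by rewrite EFG inE rD.
by rewrite (injF q r).
Qed.

Lemma spanning_branching_eq D F G : branching D ->
  spanning_branching F -> spanning_branching G -> F :\: D = G :\: D -> F = G.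
Proof.
move=> brD /andP[brF covF] /andP[brG covG] EFG; apply/eqP; rewrite eqEsubset.
by rewrite !(spanning_branching_subset brD) // EFG.
Qed.

Lemma exists_edge_notin D F G : branching D ->
  spanning_branching F -> spanning_branching G -> F != G ->
  #|F :\: D| <= #|G :\: D| -> exists2 x, x \in G :\: D & x \notin F.
Proof.
move=> brD spF spG neqFG leFG; apply/exists_inP; apply: contraNT neqFG.
move=> /exists_inPn sGF; apply/eqP/(spanning_branching_eq brD spF spG).
apply/eqP; rewrite eq_sym eqEcard leFG andbT; apply/subsetP => q qGD.
by rewrite inE (negPn (sGF q qGD)) andbT; case/setDP: qGD.
Qed.

Lemma branching_swap F x d : branching F -> x \in F ->
  d \in edge_set e -> d.2 = x.2 -> branching (d |: F :\ x).
Proof.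
move=> brF xF dE Edx; apply: branchingU1 dE _.
  exact: branchingS (subD1set F x) brF.
apply/imsetP => -[q /setD1P[qx qF] Edq].
by case/branchingP: brF => _ injF; case/eqP: qx; apply: injF; rewrite -?Edx.
Qed.

Lemma covers_heads_swap F x d : covers_heads F -> d.2 = x.2 ->
  covers_heads (d |: F :\ x).
Proof.
move=> covF Edx; apply: subset_trans covF _; apply/subsetP => _ /imsetP[q qF ->].
have [-> | qx] := eqVneq q x; first by rewrite -Edx imset_f ?setU11.
by rewrite imset_f // !inE qx qF orbT.
Qed.

Lemma spanning_branching_exchange D Fi Fk : spanning_branching D ->
  spanning_branching Fi -> spanning_branching Fk -> Fi != Fk ->
  #|Fi :\: D| <= #|Fk :\: D| ->
  exists Fj x, [/\ spanning_branching Fj, #|Fj :\: D| < #|Fk :\: D|, x \in Fk,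
    Fi :&: Fk \subset Fj :&: Fk & Fj :&: Fk = Fk :\ x].
Proof.
move=> spD spFi spFk neq_ik le_ik; case/andP: (spD) => brD covD.
have [x xFkD xFi] := exists_edge_notin brD spFi spFk neq_ik le_ik.
have /setDP[xFk xD] := xFkD; case/andP: spFk => brFk covFk.
have /branchingP[sFkE injFk] := brFk; have /branchingP[sDE _] := brD.
have /imsetP[d dD Exd] := subsetP covD _ (imset_f snd (subsetP sFkE x xFk)).
have dFk : d \notin Fk by apply: contraNN xD => dFk; rewrite (injFk x d).
exists (d |: Fk :\ x), x; rewrite setI_swap //; split=> //.
- rewrite /spanning_branching branching_swap ?covers_heads_swap //.
  exact: (subsetP sDE).
- exact: card_swapD.
apply/subsetP => q /setIP[qFi qFk]; rewrite !inE qFk andbT.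
by apply/eqP => Eqx; move: xFi; rewrite -Eqx qFi.
Qed.

End Branchings.

Theorem corollary2p10 (V : finType) (e : rel V) :
  dag e -> shellable (DT_face e).
Proof.
move=> dag_e; have [D /facet_branchingE spD] := exists_facet (branching0 e).
apply: (shellable_by_rank (is_facet := spanning_branching e)
                          (rank := fun F => #|F :\: D|)).
  move=> F; apply: iff_trans (facet_branchingE e F).
  exact: eq_facet (fun G => DT_faceE G dag_e) F.
by move=> Fi Fk; apply: spanning_branching_exchange.
Qed.
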